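(* Let $e_0,\dots,e_\eta$ be a fuzzy derivation of $e_\eta$ from $e_0$ using the fuzzy rule base $B$, and assume every value $e_\kappa(X)(u)$ ($\kappa\le\eta$, $X\in\mathbb X$, $u\in\mathbb U$) lies in $C$. Then $$T_D\cup S_U\cup S_{\mathbb A}\cup T_B\cup S_{e_0}(\tau/\tilde z)\models_{\mathcal K} S_{e_\eta}(\tau/\tilde s^{\eta}(\tilde z)).$$
   Context: Fuzzy rules. Let $\mathbb U$ be a nonempty countable set; a fuzzy set over $\mathbb U$ is a map $\mathbb U\to[0,1]$. $\mathrm{height}(A)=\sup_{u\in\mathbb U}A(u)$; $\mathrm{cut}(c,A)(u)=\min(c,A(u))$; $(A_1\cap A_2)(u)=\min(A_1(u),A_2(u))$; the union of a finite family of fuzzy sets is the pointwise maximum (the empty union is the constant $0$). Let $\mathbb A$ be a nonempty finite set of fuzzy sets over $\mathbb U$ and $\mathbb X$ a nonempty finite set of variables. A fuzzy rule $r$ is an expression ''IF $X_0$ is $A_0$ and $\dots$ and $X_n$ is $A_n$ THEN $X$ is $A$'' with $X_i,X\in\mathbb X$, $A_i,A\in\mathbb A$; $\mathrm{out}(r)=X$. A fuzzy rule base $B$ is a nonempty finite set of fuzzy rules. A fuzzy variable assignment is a map $e$ from $\mathbb X$ to fuzzy sets over $\mathbb U$. $\|X\|^r_e=\mathrm{cut}(\min_{i\le n}\mathrm{height}(e(X_i)\cap A_i),A)$ and $\|X\|^B_e=\bigcup\{\|X\|^r_e: r\in B,\mathrm{out}(r)=X\}$. A fuzzy derivation of $e_\eta$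 from $e_0$ using $B$ is a sequence $e_0,\dots,e_\eta$ of fuzzy variable assignments with $e_\kappa(X)=\|X\|^B_{e_{\kappa-1}}$ for all $1\le\kappa\le\eta$, $X\in\mathbb X$. Gödel logic: formulae with truth constants $\bar c$ ($c\in C$, $C\subseteq[0,1]$ countable), connectives $\wedge(=\min),\vee(=\max)$, $\to$ ($\|\varphi\to\psi\|=1$ if $\|\varphi\|\le\|\psi\|$ else $\|\psi\|$), $\leftrightarrow$ ($\min$ of both implications), $\eqcirc$ (value $1$ if the two values are equal, else $0$), quantifiers $\forall=\inf$, $\exists=\sup$; predicates are $[0,1]$-valued; $\mathcal I\models\varphi$ iff $\varphi$ has value $1$ under every variable assignment. An order clause is a finite set of literals $\varepsilon_1\eqcirc\varepsilon_2$ or $\varepsilon_1\prec\varepsilon_2$ (the latter has value $1$ iff the value of $\varepsilon_1$ is $<$ that of $\varepsilon_2$), true under an assignment if some literal has value 1; a model of a set of clauses/formulae satisfies each under all assignments. Truth-constant convention: $C\supseteq\{0,1\}\cup\bigcup_{A\in\mathbb A}A[\mathbb U]\cup\bigcup_{X}e_0(X)[\mathbb U]$. Encoding. Let $\mathcal L^*$ be a countable first-order language containing (pairwise distinct) a constant $\tilde z$, a unary function symbol $\tilde s$, binary function symbols $\mathit{frac}$, $\mathit{{-}frac}$, unary predicates $\mathit{nat},\mathit{rat},\mathit{time},\mathit{uni}$, a unary predicate $\tilde G_A$ for each $A\in\mathbb A$, binary predicates $\tilde H_X$ ($X\in\mathbb X$) and $\tilde H^r_X$ ($r\in B$, $\mathrm{out}(r)=X$).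 A natural numeral is $\tilde s^n(\tilde z)$. A rational numeral is $\mathit{frac}(\tilde s^m(\tilde z),\tilde s^n(\tilde z))$ with $n>0$ (value $m/n$) or $\mathit{{-}frac}(\tilde s^m(\tilde z),\tilde s^n(\tilde z))$ with $m,n>0$ (value $-m/n$). Fix an injection $\gamma:\mathbb U\to\mathbb Q$ and a set $\tilde{\mathbb U}$ of rational numerals with $\{\|\tilde u\|:\tilde u\in\tilde{\mathbb U}\}=\gamma[\mathbb U]$; $\langle\tilde u\rangle=\gamma^{-1}(\|\tilde u\|)\in\mathbb U$. $\mathcal K$ is the class of interpretations $\mathcal I$ for $\mathcal L^*$ whose universe is the set of ground terms of $\mathcal L^*$ and in which every function symbol is interpreted by term formation ($f^{\mathcal I}(t_1,\dots,t_m)=f(t_1,\dots,t_m)$); predicates are arbitrary. $\Gamma\models_{\mathcal K}\Phi$ means every $\mathcal I\in\mathcal K$ with $\mathcal I\models\Gamma$ satisfies $\mathcal I\models\Phi$. $T_D=\{\mathit{nat}(\tilde z),\ \mathit{nat}(\tilde s(x))\leftrightarrow\mathit{nat}(x),\ \mathit{rat}(\mathit{frac}(x,\tilde s(y)))\leftrightarrow\mathit{nat}(x)\wedge\mathit{nat}(y),\ \mathit{rat}(\mathit{{-}frac}(\tilde s(x),\tilde s(y)))\leftrightarrow\mathit{nat}(x)\wedge\mathit{nat}(y)\}\cup\{\mathit{nat}(f(x_1,\dots,x_m))\eqcirc\bar0: f\notin\{\tilde z,\tilde s\}\}\cup\{\mathit{rat}(f(x_1,\dots,x_m))\eqcirc\bar0: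 f\notin\{\mathit{frac},\mathit{{-}frac}\}\}\cup\{\mathit{time}(x)\leftrightarrow\mathit{nat}(x),\ \mathit{uni}(x)\to\mathit{rat}(x)\}$ ($f$ ranges over function symbols of $\mathcal L^*$, $m$ its arity, $x_i$ distinct variables). $S_U=\{\mathit{uni}(\tilde u)\eqcirc\bar1:\tilde u\in\tilde{\mathbb U}\}\cup\{\mathit{uni}(t)\eqcirc\bar0: t \text{ ground term of }\mathcal L^*,\ t\notin\tilde{\mathbb U}\}$. $S_{\mathbb A}=\{\tilde G_A(\tilde u)\eqcirc\overline{A(\langle\tilde u\rangle)}: A\in\mathbb A,\tilde u\in\tilde{\mathbb U}\}$. For a fuzzy variable assignment $e$: $S_e=\{\tilde H_X(\tau,\tilde u)\eqcirc\overline{e(X)(\langle\tilde u\rangle)}: X\in\mathbb X,\tilde u\in\tilde{\mathbb U}\}$ with $\tau$ a variable; $S_e(\tau/t)$ is its instance with $\tau$ replaced by the ground term $t$. For the rule $r$ above: $\varphi_r(\tau,y)=\mathit{time}(\tau)\wedge\mathit{uni}(y)\to\big(\tilde H^r_X(\tilde s(\tau),y)\eqcirc((\bigwedge_{i=0}^n\exists x\,(\mathit{uni}(x)\wedge\tilde H_{X_i}(\tau,x)\wedge\tilde G_{A_i}(x)))\wedge\tilde G_A(y))\big)$. $T_B=\{\varphi_r(\tau,y): r\in B\}\cup\{\mathit{time}(\tau)\wedge\mathit{uni}(y)\to(\tilde H_X(\tilde s(\tau),y)\eqcirc\bigvee_{r\in B,\mathrm{out}(r)=X}\tilde H^r_X(\tilde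 s(\tau),y)): X\in\mathbb X\}$ (an empty disjunction is $\bar0$). *)

From HB Require Import structures.
From mathcomp Require Import all_boot all_order all_algebra.
From mathcomp Require Import boolp classical_sets cardinality reals.
Set Implicit Arguments. Unset Strict Implicit. Unset Printing Implicit Defensive.
Import Order.TTheory GRing.Theory Num.Theory.
Local Open Scope ring_scope.
Local Open Scope classical_set_scope.

Inductive fsym (Fe : Type) := Fz | Fs | Ffrac | Fmfrac | Fext of Fe.
Arguments Fz {Fe}. Arguments Fs {Fe}. Arguments Ffrac {Fe}. Arguments Fmfrac {Fe}.

Definition farity {Fe} (arE : Fe -> nat) (f : fsym Fe) : nat :=
  match f with Fz => 0 | Fs => 1 | Ffrac => 2 | Fmfrac => 2 | Fext e => arE e end.

Inductive term (Fe : Type) := Var of nat | App of fsym Fe & list (term Fe).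
Arguments Var {Fe}. Arguments App {Fe}. Arguments Fext {Fe}.

(* ground, arity-respecting terms: the universe of every interpretation in K *)
Fixpoint gwf {Fe} (arE : Fe -> nat) (t : term Fe) : bool :=
  match t with
  | Var _ => false
  | App f ts => (size ts == farity arE f) && all (gwf arE) ts
  end.

Fixpoint tsubst {Fe} (s : nat -> term Fe) (t : term Fe) : term Fe :=
  match t with
  | Var n => s n
  | App f ts => App f (map (tsubst s) ts)
  end.

Definition nzero {Fe} : term Fe := App Fz [::].
Definition sapp {Fe} (t : term Fe) : term Fe := App Fs [:: t].

Fixpoint natnum {Fe} (t : term Fe) : option nat :=
  match t with
  | App Fz [::] => Some 0%N
  | App Fs [:: t'] => omap S (natnum t')
  | _ => None
  end.

Definition numval {Fe} (t : term Fe) : option rat :=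
  match t with
  | App Ffrac [:: a; b] =>
      match natnum a, natnum b with
      | Some m, Some n => if (0 < n)%N then Some (m%:R / n%:R) else None
      | _, _ => None
      end
  | App Fmfrac [:: a; b] =>
      match natnum a, natnum b with
      | Some m, Some n => if (0 < m)%N && (0 < n)%N then Some (- (m%:R / n%:R)) else None
      | _, _ => None
      end
  | _ => None
  end.

Definition rule (Xv Av : Type) := (seq (Xv * Av) * Xv * Av)%type.
Definition rprem {Xv Av} (r : rule Xv Av) := r.1.1.
Definition rout {Xv Av} (r : rule Xv Av) := r.1.2.
Definition rconc {Xv Av} (r : rule Xv Av) := r.2.

(* Predicate symbols: nat, rat, time, uni, G_A, H_X, H^r_X (X = out r),
   plus arbitrary extra ones (type Pe). *)
Inductive psym (Xv Av Pe : Type) :=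
  Pnat | Prat | Ptime | Puni | PG of Av | PH of Xv | PHr of rule Xv Av | Pext of Pe.
Arguments Pnat {Xv Av Pe}. Arguments Prat {Xv Av Pe}.
Arguments Ptime {Xv Av Pe}. Arguments Puni {Xv Av Pe}.
Arguments PG {Xv Av Pe}. Arguments PH {Xv Av Pe}. Arguments PHr {Xv Av Pe}. Arguments Pext {Xv Av Pe}.

(* Gödel-logic formulas with truth constants and the connective ≗ (Eqc) *)
Inductive form (R Fe P : Type) :=
| Cst of R
| Atom of P & list (term Fe)
| And of form R Fe P & form R Fe P
| Or of form R Fe P & form R Fe P
| Imp of form R Fe P & form R Fe P
| Iff of form R Fe P & form R Fe P
| Eqc of form R Fe P & form R Fe P
| All of nat & form R Fe P
| Ex of nat & form R Fe P.
Arguments Cst {R Fe P}. Arguments Atom {R Fe P}. Arguments And {R Fe P}.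
Arguments Or {R Fe P}. Arguments Imp {R Fe P}. Arguments Iff {R Fe P}.
Arguments Eqc {R Fe P}. Arguments All {R Fe P}. Arguments Ex {R Fe P}.

Fixpoint bigAnd {R : realType} {Fe P} (s : seq (form R Fe P)) : form R Fe P :=
  match s with [::] => Cst 1 | [:: f] => f | f :: s' => And f (bigAnd s') end.
Fixpoint bigOr {R : realType} {Fe P} (s : seq (form R Fe P)) : form R Fe P :=
  match s with [::] => Cst 0 | [:: f] => f | f :: s' => Or f (bigOr s') end.

Section Semantics.
Context {R : realType} {Fe P : Type} (arE : Fe -> nat).

Definition upd (s : nat -> term Fe) (n : nat) (t : term Fe) : nat -> term Fe :=
  fun m => if m == n then t else s m.

Definition impv (a b : R) : R := if a <= b then 1 else b.

(* I interprets predicates; function symbols are interpreted by term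
   formation, so the value of a term under s is its substitution instance. *)
Fixpoint eval (I : P -> seq (term Fe) -> R) (s : nat -> term Fe)
    (f : form R Fe P) : R :=
  match f with
  | Cst c => c
  | Atom p ts => I p (map (tsubst s) ts)
  | And a b => Num.min (eval I s a) (eval I s b)
  | Or a b => Num.max (eval I s a) (eval I s b)
  | Imp a b => impv (eval I s a) (eval I s b)
  | Iff a b => Num.min (impv (eval I s a) (eval I s b)) (impv (eval I s b) (eval I s a))
  | Eqc a b => if eval I s a == eval I s b then 1 else 0
  | All n a => inf [set eval I (upd s n t) a | t in [set t | gwf arE t]]
  | Ex n a => sup [set eval I (upd s n t) a | t in [set t | gwf arE t]]
  end.

Definition holds (I : P -> seq (term Fe) -> R) (f : form R Fe P) : Prop :=
  forall s : nat -> term Fe, (forall n, gwf arE (s n)) -> eval I s f = 1.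

Definition Kentails (Gamma Delta : set (form R Fe P)) : Prop :=
  forall I : P -> seq (term Fe) -> R,
    (forall p ts, 0 <= I p ts <= 1) ->
    (forall f, Gamma f -> holds I f) ->
    forall f, Delta f -> holds I f.
End Semantics.

Section Fuzzy.
Context {R : realType} {U : Type} {Xv : finType} {Av : Type}.

Definition height (f : U -> R) : R := sup (range f).

(* ||X||^r_e (u) = cut(min_i height(e(X_i) ∩ A_i), A)(u); premises nonempty *)
Definition rule_val (Aval : Av -> U -> R) (e : Xv -> U -> R) (r : rule Xv Av)
  : U -> R :=
  fun u => Num.min
    (\big[Num.min/1]_(p <- rprem r) height (fun v => Num.min (e p.1 v) (Aval p.2 v)))
    (Aval (rconc r) u).

(* ||X||^B_e (u) = max over rules of B with output X (empty max = 0) *)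
Definition fuzzy_step (Aval : Av -> U -> R) (B : seq (rule Xv Av))
    (e : Xv -> U -> R) : Xv -> U -> R :=
  fun X u => \big[Num.max/0]_(r <- B | rout r == X) rule_val Aval e r u.
End Fuzzy.

Section Encoding.
Context {R : realType} {Fe : Type} (arE : Fe -> nat) {Pe : Type}
  {U : Type} {Xv Av : finType}.
Local Notation fm := (form R Fe (psym Xv Av Pe)).

Definition T_D : set fm := fun f =>
  f = Atom Pnat [:: nzero]
  \/ f = Iff (Atom Pnat [:: sapp (Var 0)]) (Atom Pnat [:: Var 0])
  \/ f = Iff (Atom Prat [:: App Ffrac [:: Var 0; sapp (Var 1)]])
             (And (Atom Pnat [:: Var 0]) (Atom Pnat [:: Var 1]))
  \/ f = Iff (Atom Prat [:: App Fmfrac [:: sapp (Var 0); sapp (Var 1)]])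
             (And (Atom Pnat [:: Var 0]) (Atom Pnat [:: Var 1]))
  \/ (exists g : fsym Fe, g <> Fz /\ g <> Fs /\
        f = Eqc (Atom Pnat [:: App g (map Var (iota 0 (farity arE g)))]) (Cst 0))
  \/ (exists g : fsym Fe, g <> Ffrac /\ g <> Fmfrac /\
        f = Eqc (Atom Prat [:: App g (map Var (iota 0 (farity arE g)))]) (Cst 0))
  \/ f = Iff (Atom Ptime [:: Var 0]) (Atom Pnat [:: Var 0])
  \/ f = Imp (Atom Puni [:: Var 0]) (Atom Prat [:: Var 0]).

Definition S_U (Ut : set (term Fe)) : set fm := fun f =>
  (exists t, Ut t /\ f = Eqc (Atom Puni [:: t]) (Cst 1))
  \/ (exists t, gwf arE t /\ ~ Ut t /\ f = Eqc (Atom Puni [:: t]) (Cst 0)).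

(* <t> is the u with gamma u = ||t|| *)
Definition S_A (gamma : U -> rat) (Ut : set (term Fe)) (Aval : Av -> U -> R)
  : set fm := fun f =>
  exists (A : Av) (t : term Fe) (u : U), Ut t /\ numval t = Some (gamma u) /\
    f = Eqc (Atom (PG A) [:: t]) (Cst (Aval A u)).

Definition S_e (gamma : U -> rat) (Ut : set (term Fe)) (e : Xv -> U -> R)
    (t0 : term Fe) : set fm := fun f =>
  exists (X : Xv) (t : term Fe) (u : U), Ut t /\ numval t = Some (gamma u) /\
    f = Eqc (Atom (PH X) [:: t0; t]) (Cst (e X u)).

(* variables: tau = 0, y = 1, x = 2 *)
Definition guard_ty : fm := And (Atom Ptime [:: Var 0]) (Atom Puni [:: Var 1]).

Definition prem_form (p : Xv * Av) : fm :=
  Ex 2 (And (And (Atom Puni [:: Var 2]) (Atom (PH p.1) [:: Var 0; Var 2]))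
            (Atom (PG p.2) [:: Var 2])).

Definition phi_r (r : rule Xv Av) : fm :=
  Imp guard_ty
    (Eqc (Atom (PHr r) [:: sapp (Var 0); Var 1])
         (And (bigAnd (map prem_form (rprem r))) (Atom (PG (rconc r)) [:: Var 1]))).

Definition psi_X (B : seq (rule Xv Av)) (X : Xv) : fm :=
  Imp guard_ty
    (Eqc (Atom (PH X) [:: sapp (Var 0); Var 1])
         (bigOr [seq Atom (PHr r) [:: sapp (Var 0); Var 1] | r <- B & rout r == X])).

Definition T_B (B : seq (rule Xv Av)) : set fm := fun f =>
  (exists r, r \in B /\ f = phi_r r) \/ (exists X, f = psi_X B X).
End Encoding.

From Pilot Require Import Defs.
From HB Require Import structures.
From mathcomp Require Import all_boot all_order all_algebra.
From mathcomp Require Import boolp classical_sets cardinality reals.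
Set Implicit Arguments. Unset Strict Implicit. Unset Printing Implicit Defensive.
Import Order.TTheory GRing.Theory Num.Theory.
Local Open Scope ring_scope.
Local Open Scope classical_set_scope.

(* Proof idea: in a model of the theory, T_D forces nat and time to be 1 on
   natural numerals and S_U, S_A pin down uni and the G_A on the numerals of U.
   Instantiating T_B at tau := s^k(z) then turns the value of H_X at time
   s^(k+1)(z) into the max over the rules for X of the min of the premise
   heights and the conclusion, i.e. one step of the fuzzy derivation; the
   existential in a premise ranges over all ground terms, but the factor
   uni(x) kills the non-numerals, so its sup is the height. Induction on k
   propagates S_(e_0) at time z to S_(e_eta) at time s^eta(z). *)

Local Notation numeral n := (iter n sapp nzero).

Fixpoint tsubst_ground {Fe} (arE : Fe -> nat) s (t : term Fe) {struct t} :
  gwf arE t -> tsubst s t = t.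
Proof.
case: t => [//|f ts] /= /andP[_ gts]; congr App.
elim: ts gts => //= t ts IH /andP[gt gts].
by rewrite (tsubst_ground _ arE) // IH.
Qed.

Lemma gwf_numeral {Fe} (arE : Fe -> nat) n : gwf arE (numeral n).
Proof. by elim: n => //= n ->. Qed.

Lemma natnum_Some {Fe} {t : term Fe} {n} : natnum t = Some n -> t = numeral n.
Proof.
elim: n t => [|n IH] [//|[] ts] //=; case: ts => [|a [|b ts]] //=;
  case E: (natnum a) => [m|] //= [Em]; subst m.
by rewrite /sapp (IH a E).
Qed.

Lemma numval_gwf {Fe} (arE : Fe -> nat) {t : term Fe} {q} :
  numval t = Some q -> gwf arE t.
Proof.
case: t => [//|[] ts] //=; case: ts => [|a [|b []]] //=;
  case Ea: (natnum a) => [m|] //; case Eb: (natnum b) => [n|] // _;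
  by rewrite (natnum_Some Ea) (natnum_Some Eb) !gwf_numeral.
Qed.

Lemma sup_cofinal_subset {R : realType} (E F : set R) :
  F `<=` E -> (forall x, E x -> exists2 y, F y & x <= y) -> F !=set0 ->
  has_ubound E -> sup E = sup F.
Proof.
move=> FE EF [y0 Fy0] ubE.
have supE : has_sup E by split; first by exists y0; apply: FE.
have supF : has_sup F.
  by split; [exists y0 | case: ubE => M EM; exists M => x /FE /EM].
apply/le_anti/andP; split; apply: sup_le => //.
- by move=> x /EF [y Fy xy]; apply/downP; exists y.
- by exists y0; apply: FE.
- by move=> x /FE Ex; apply/downP; exists x.
- by exists y0.
Qed.

Lemma impv1l {R : realType} (c : R) : c <= 1 -> impv 1 c = c.
Proof. by rewrite /impv => c1; case: ifP => // c1'; apply/le_anti; rewrite c1 c1'. Qed.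

Lemma impv_iff1 {R : realType} (a b : R) : a <= 1 -> b <= 1 ->
  Num.min (impv a b) (impv b a) = 1 -> a = b.
Proof.
rewrite /impv => a1 b1; case: ifP => ab; case: ifP => ba.
- by move=> _; apply/le_anti; rewrite ab ba.
- by rewrite minC min_l // => e; apply/le_anti; rewrite ab e.
- by rewrite min_l // => e; apply/le_anti; rewrite ba e andbT.
- by have := le_total a b; rewrite ab ba.
Qed.

Section FormulaValues.
Variables (R : realType) (Fe P : Type) (arE : Fe -> nat).
Variables (I : P -> seq (term Fe) -> R) (s : nat -> term Fe).

Lemma eval_Eqc1 (a b : Defs.form R Fe P) :
  eval arE I s (Eqc a b) = 1 -> eval arE I s a = eval arE I s b.
Proof. by rewrite /=; case: eqP => // _ /eqP; rewrite eq_sym oner_eq0. Qed.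

Lemma eval_bigAnd {A : Type} (g : A -> Defs.form R Fe P) l :
  (forall x, eval arE I s (g x) <= 1) ->
  eval arE I s (bigAnd (map g l)) = \big[Num.min/1]_(x <- l) eval arE I s (g x).
Proof.
move=> g1; elim: l => [|a l IH]; first by rewrite big_nil.
by rewrite big_cons -IH; case: l {IH} => [|b l] //=; rewrite minC min_r.
Qed.

Lemma eval_bigOr {A : Type} (g : A -> Defs.form R Fe P) l :
  (forall x, 0 <= eval arE I s (g x)) ->
  eval arE I s (bigOr (map g l)) = \big[Num.max/0]_(x <- l) eval arE I s (g x).
Proof.
move=> g0; elim: l => [|a l IH]; first by rewrite big_nil.
by rewrite big_cons -IH; case: l {IH} => [|b l] //=; rewrite maxC max_r.
Qed.
End FormulaValues.

Section Model.
Variables (R : realType) (Fe : Type) (arE : Fe -> nat) (Pe U : Type).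
Variables (Xv Av : finType) (Aval : Av -> U -> R) (B : seq (rule Xv Av)).
Variables (gamma : U -> rat) (Ut : set (term Fe)) (u0 : U).
Hypothesis Aval01 : forall A u, 0 <= Aval A u <= 1.
Hypothesis Ut_numval : forall t, Ut t -> exists u, numval t = Some (gamma u).
Hypothesis numval_Ut : forall u, exists t, Ut t /\ numval t = Some (gamma u).

Variable I : psym Xv Av Pe -> seq (term Fe) -> R.
Hypothesis I01 : forall p ts, 0 <= I p ts <= 1.

Local Notation ground s := (forall n, gwf arE (s n)).
Local Notation evalI := (Defs.eval arE I).
Local Notation holdsI := (holds arE I).

Definition encodes (e : Xv -> U -> R) (t0 : term Fe) : Prop :=
  forall X t u, Ut t -> numval t = Some (gamma u) -> I (PH X) [:: t0; t] = e X u.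

Lemma Ut_gwf t : Ut t -> gwf arE t.
Proof. by case/Ut_numval => u /numval_gwf. Qed.

Lemma holds_Eqc_ground p t c : gwf arE t ->
  holdsI (Eqc (Atom p [:: t]) (Cst c)) -> I p [:: t] = c.
Proof.
move=> gt /(_ (fun _ => nzero) (fun _ => erefl)) /eval_Eqc1 /=.
by rewrite (@tsubst_ground _ arE).
Qed.

Lemma encodes_S_e e t0 : gwf arE t0 ->
  (forall f, S_e gamma Ut e t0 f -> holdsI f) -> encodes e t0.
Proof.
move=> gt0 He X t u Ut_t tu.
have /(_ (fun _ => nzero) (fun _ => erefl)) /eval_Eqc1 /= := He _ (ex_intro _ X
  (ex_intro _ t (ex_intro _ u (conj Ut_t (conj tu erefl))))).
by rewrite !(@tsubst_ground _ arE) // Ut_gwf.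
Qed.

Lemma S_e_encodes e t0 : gwf arE t0 -> encodes e t0 ->
  forall f, S_e gamma Ut e t0 f -> holdsI f.
Proof.
move=> gt0 He _ [X [t [u [Ut_t [tu ->]]]]] s _ /=.
by rewrite !(@tsubst_ground _ arE) ?(He X t u) ?eqxx // Ut_gwf.
Qed.

Hypothesis I_TD : forall f, T_D arE f -> holdsI f.
Hypothesis I_SU : forall f, S_U arE Ut f -> holdsI f.
Hypothesis I_SA : forall f, S_A gamma Ut Aval f -> holdsI f.
Hypothesis I_TB : forall f, T_B B f -> holdsI f.

Lemma holds_Iff_Atom s p q a b : ground s ->
  holdsI (Iff (Atom p [:: a]) (Atom q [:: b])) ->
  I p [:: tsubst s a] = I q [:: tsubst s b].
Proof.
move=> gs /(_ s gs) /=; apply: impv_iff1.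
- by case/andP: (I01 p [:: tsubst s a]).
- by case/andP: (I01 q [:: tsubst s b]).
Qed.

Lemma I_nat_numeral k : I Pnat [:: numeral k] = 1.
Proof.
elim: k => [|k IHk].
  exact: I_TD (or_introl erefl) (fun _ => nzero) (fun _ => erefl).
rewrite -IHk.
apply: (holds_Iff_Atom (s := fun _ => numeral k) (a := sapp (Var 0)) (b := Var 0)).
  by move=> _; exact: gwf_numeral.
by apply: I_TD; right; left.
Qed.

Lemma I_time_numeral k : I Ptime [:: numeral k] = 1.
Proof.
rewrite -(I_nat_numeral k).
apply: (holds_Iff_Atom (s := fun _ => numeral k) (a := Var 0) (b := Var 0)).
  by move=> _; exact: gwf_numeral.
by apply: I_TD; do 6 right; left.
Qed.

Lemma I_uni_Ut t : Ut t -> I Puni [:: t] = 1.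
Proof.
move=> Ut_t; apply: holds_Eqc_ground; first exact: Ut_gwf.
by apply: I_SU; left; exists t.
Qed.

Lemma I_uni_notUt t : gwf arE t -> ~ Ut t -> I Puni [:: t] = 0.
Proof.
move=> gt nUt; apply: holds_Eqc_ground => //.
by apply: I_SU; right; exists t.
Qed.

Lemma I_G_Ut A {t u} :
  Ut t -> numval t = Some (gamma u) -> I (PG A) [:: t] = Aval A u.
Proof.
move=> Ut_t tu; apply: holds_Eqc_ground; first exact: Ut_gwf.
by apply: I_SA; exists A, t, u.
Qed.

Lemma eval_guard_ty {s k} :
  s 0%N = numeral k -> Ut (s 1%N) -> evalI s guard_ty = 1.
Proof. by move=> s0 Us1 /=; rewrite s0 I_time_numeral I_uni_Ut // minxx. Qed.

Lemma holds_guarded_Eqc {a b s k} : holdsI (Imp guard_ty (Eqc a b)) -> ground s ->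
  s 0%N = numeral k -> Ut (s 1%N) -> evalI s a = evalI s b.
Proof.
move=> h gs s0 Us1; apply: eval_Eqc1; have := h s gs.
change (impv (evalI s guard_ty) (evalI s (Eqc a b)) = 1 -> evalI s (Eqc a b) = 1).
by rewrite (eval_guard_ty s0 Us1) impv1l //=; case: ifP.
Qed.

Section Step.
Variables (e : Xv -> U -> R) (k : nat).
Hypothesis e01 : forall X u, 0 <= e X u <= 1.
Hypothesis He : encodes e (numeral k).

Lemma eval_prem_form {s} p : s 0%N = numeral k ->
  evalI s (prem_form p) = height (fun v => Num.min (e p.1 v) (Aval p.2 v)).
Proof.
move=> s0; rewrite /height /=.
have upd2 t : upd s 2 t 2 = t by rewrite /upd eqxx.
have upd0 t : upd s 2 t 0 = numeral k by rewrite -s0.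
have prem_numeral t v : Ut t -> numval t = Some (gamma v) ->
    Num.min (Num.min (I Puni [:: t]) (I (PH p.1) [:: numeral k; t])) (I (PG p.2) [:: t])
    = Num.min (e p.1 v) (Aval p.2 v).
  move=> Ut_t tv; rewrite I_uni_Ut // (He _ Ut_t tv) (I_G_Ut _ Ut_t tv).
  by rewrite [Num.min 1 _]min_r //; case/andP: (e01 p.1 v).
apply: sup_cofinal_subset.
- move=> _ [v _ <-]; have [t [Ut_t tv]] := numval_Ut v.
  by exists t; [exact: Ut_gwf | rewrite !upd2 upd0 (prem_numeral _ v)].
- move=> _ [t gt <-]; rewrite !upd2 upd0.
  have [Ut_t|nUt] := pselect (Ut t).
    by have [v tv] := Ut_numval Ut_t; exists (Num.min (e p.1 v) (Aval p.2 v));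
      [exists v | rewrite (prem_numeral _ v)].
  exists (Num.min (e p.1 u0) (Aval p.2 u0)); first by exists u0.
  rewrite I_uni_notUt // (@le_trans _ _ 0) ?ge_min ?lexx // le_min.
  by case/andP: (e01 p.1 u0) => -> _; case/andP: (Aval01 p.2 u0).
- by exists (Num.min (e p.1 u0) (Aval p.2 u0)), u0.
- exists 1 => _ [t _ <-]; rewrite ge_min; apply/orP; right.
  by case/andP: (I01 (PG p.2) [:: upd s 2 t 2]).
Qed.

Lemma I_Hr_next {r s u} : r \in B -> ground s -> s 0%N = numeral k ->
  Ut (s 1%N) -> numval (s 1%N) = Some (gamma u) ->
  I (PHr r) [:: sapp (s 0%N); s 1%N] = rule_val Aval e r u.
Proof.
move=> rB gs s0 Us1 s1u.
have /= -> :=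
  holds_guarded_Eqc (I_TB (or_introl (ex_intro _ r (conj rB erefl)))) gs s0 Us1.
rewrite (I_G_Ut _ Us1 s1u) eval_bigAnd => [|p]; rewrite /rule_val.
  by congr Num.min; apply: eq_bigr => p _; exact: eval_prem_form.
rewrite (eval_prem_form p s0); apply: ge_sup.
  by exists (Num.min (e p.1 u0) (Aval p.2 u0)), u0.
by move=> _ [v _ <-]; rewrite ge_min; case/andP: (Aval01 p.2 v) => _ ->; rewrite orbT.
Qed.

Lemma encodes_fuzzy_step : encodes (fuzzy_step Aval B e) (numeral k.+1).
Proof.
move=> X t u Ut_t tu.
pose s := upd (upd (fun _ => nzero) 0 (numeral k)) 1 t.
have gs : ground s.
  move=> n; rewrite /s /upd; case: ifP => _; first exact: Ut_gwf.
  by case: ifP => _ //; exact: gwf_numeral.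
have s0 : s 0%N = numeral k by [].
have s1 : s 1%N = t by [].
have := holds_guarded_Eqc (I_TB (or_intror (ex_intro _ X erefl))) gs s0.
rewrite s1 => /(_ Ut_t) /= ->; rewrite eval_bigOr => [|r]; last first.
  by case/andP: (I01 (PHr r) [:: sapp (s 0%N); s 1%N]).
rewrite /fuzzy_step -[RHS]big_filter; apply: eq_big_seq => r.
rewrite mem_filter => /andP[_ rB] /=.
by apply: (I_Hr_next rB gs s0); rewrite s1.
Qed.
End Step.
End Model.

Theorem lemma4 (R : realType) (U : countType) (Fe : countType) (arE : Fe -> nat)
  (Pe : countType) (Xv Av : finType) (Aval : Av -> U -> R)
  (B : seq (rule Xv Av)) (C : set R) (gamma : U -> rat) (Ut : set (term Fe))
  (es : nat -> Xv -> U -> R) (eta : nat) :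
  (* U nonempty; X and A nonempty finite sets of variables / fuzzy sets *)
  inhabited U -> (0 < #|Xv|)%N -> (0 < #|Av|)%N ->
  injective Aval -> (forall A u, 0 <= Aval A u <= 1) ->
  (* B a nonempty rule base; each rule has at least one premise *)
  B != [::] -> (forall r, r \in B -> rprem r != [::]) ->
  (* e_0, ..., e_eta is a fuzzy derivation *)
  (forall X u, 0 <= es 0%N X u <= 1) ->
  (forall k, (0 < k <= eta)%N -> forall X u, es k X u = fuzzy_step Aval B (es k.-1) X u) ->
  (* truth constants *)
  countable C -> (forall c, C c -> 0 <= c <= 1) -> C 0 -> C 1 ->
  (forall A u, C (Aval A u)) -> (forall X u, C (es 0%N X u)) ->
  (forall k X u, (k <= eta)%N -> C (es k X u)) ->
  (* the numerals for U *)
  injective gamma ->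
  (forall t, Ut t -> exists u, numval t = Some (gamma u)) ->
  (forall u, exists t, Ut t /\ numval t = Some (gamma u)) ->
  Kentails arE
    (T_D arE `|` S_U (Pe := Pe) (Xv := Xv) (Av := Av) arE Ut
       `|` S_A (Pe := Pe) (Xv := Xv) gamma Ut Aval
       `|` T_B (Pe := Pe) B
       `|` S_e (Pe := Pe) (Av := Av) gamma Ut (es 0%N) nzero)
    (S_e (Pe := Pe) (Av := Av) gamma Ut (es eta) (iter eta sapp nzero)).
Proof.
move=> [u0] _ _ _ Aval01 _ _ _ Hstep _ C01 _ _ _ _ HC _ Ut_numval numval_Ut.
move=> I I01 HG.
have es01 k X u : (k <= eta)%N -> 0 <= es k X u <= 1 by move=> keta; apply/C01/HC.
have [I_TD I_SU I_SA I_TB I_Se0] :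
    [/\ forall f, T_D arE f -> holds arE I f,
        forall f, S_U arE Ut f -> holds arE I f,
        forall f, S_A gamma Ut Aval f -> holds arE I f,
        forall f, T_B B f -> holds arE I f
      & forall f, S_e gamma Ut (es 0%N) nzero f -> holds arE I f].
  by split=> f hf; apply: HG;
    [do 4 left | do 3 left; right | do 2 left; right | left; right | right].
have encodes_es k : (k <= eta)%N -> encodes gamma Ut I (es k) (numeral k).
  elim: k => [_|k IHk keta].
    exact: (encodes_S_e Ut_numval (gwf_numeral arE 0) I_Se0).
  have -> : es k.+1 = fuzzy_step Aval B (es k).
    by apply/funext => X; apply/funext => u; exact: Hstep.
  apply: (encodes_fuzzy_step u0 Aval01 Ut_numval numval_Ut I01 I_TD I_SU I_SA I_TB).
    by move=> X u; apply: es01; exact: ltnW.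
  by apply: IHk; exact: ltnW.
exact: (S_e_encodes Ut_numval (gwf_numeral arE eta) (encodes_es _ (leqnn eta))).
Qed.
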